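(* Let $\Sigma$ be a set of $\mathscr{L}$-sentences that is closed under $K$ (i.e. $K\phi\in\Sigma$ whenever $\phi\in\Sigma$) and that contains all instances of the schemata $E1$ and $E2$. Then $\mathcal{M}_\Sigma$ satisfies all instances of $E4$, i.e. the universal closure of $K\phi\rightarrow KK\phi$ for every $\mathscr{L}$-formula $\phi$.
   Context: $\mathscr{L}$ is the language of Peano arithmetic (variables, constant $0$, unary $S$, binary $+$, $\cdot$) extended by a unary modal operator $K$: whenever $\phi$ is a formula, $K\phi$ is a formula (called purely modal). An $\mathscr{L}$-structure consists of a first-order structure for the arithmetic part together with a truth value for each purely modal formula $K\phi$ and each assignment $s$ of the variables, subject to: (a) independence from $s(x)$ for $x$ not free in $\phi$; (b) invariance under alphabetic variants of $\phi$; (c) $\mathcal{M}\models K\phi(x|y)[s]$ iff $\mathcal{M}\models K\phi[s(x|s(y))]$ when $y$ is substitutable for $x$ in $\phi$. Satisfaction is extended inductively to all formulas. For a set $\Sigma$ of sentences, $\Sigma\models\phi$ means every $\mathscr{L}$-structure satisfying all members of $\Sigma$ satisfies $\phi$ under all assignments; $\phi$ is valid if $\emptyset\models\phi$. For a formula $\phi$ and an assignment $s$ into $\mathbb{N}$, $\phi^s$ is the sentence obtained by replacing each free variable $x$ of $\phi$ by the numeral $\overline{s(x)}$. $\mathcal{M}_\Sigma$ is the $\mathscr{L}$-structure with universe $\mathbb{N}$, arithmetic symbols interpreted as usual, and $\mathcal{M}_\Sigma\models K\phi[s]$ iff $\Sigma\models\phi^s$. Schema $E1$: the universal closure of $K\phi$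 whenever $\phi$ is valid. Schema $E2$: the universal closure of $K(\phi\rightarrow\psi)\rightarrow K\phi\rightarrow K\psi$, where $A\rightarrow B\rightarrow C$ abbreviates $A\rightarrow(B\rightarrow C)$. *)

From Stdlib Require Import List Arith.
Import ListNotations.

Inductive term : Type :=
| Var : nat -> term
| Zero : term
| Succ : term -> term
| Plus : term -> term -> term
| Times : term -> term -> term.

(** Enderton-style primitives: =, ¬, →, ∀, plus the modal K. *)
Inductive formula : Type :=
| Eq : term -> term -> formula
| Neg : formula -> formula
| Imp : formula -> formula -> formula
| All : nat -> formula -> formula
| K : formula -> formula.

Fixpoint occurs_term (x : nat) (t : term) : bool :=
  match t with
  | Var y => Nat.eqb x y
  | Zero => false
  | Succ t1 => occurs_term x t1
  | Plus t1 t2 | Times t1 t2 => occurs_term x t1 || occurs_term x t2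
  end.

Fixpoint freeb (x : nat) (phi : formula) : bool :=
  match phi with
  | Eq t1 t2 => occurs_term x t1 || occurs_term x t2
  | Neg p => freeb x p
  | Imp p q => freeb x p || freeb x q
  | All y p => negb (Nat.eqb x y) && freeb x p
  | K p => freeb x p
  end.

Definition sentence (phi : formula) : Prop := forall x, freeb x phi = false.

Fixpoint max_var_term (t : term) : nat :=
  match t with
  | Var y => y
  | Zero => 0
  | Succ t1 => max_var_term t1
  | Plus t1 t2 | Times t1 t2 => Nat.max (max_var_term t1) (max_var_term t2)
  end.

Fixpoint max_var (phi : formula) : nat :=
  match phi with
  | Eq t1 t2 => Nat.max (max_var_term t1) (max_var_term t2)
  | Neg p => max_var p
  | Imp p q => Nat.max (max_var p) (max_var q)
  | All y p => Nat.max y (max_var p)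
  | K p => max_var p
  end.

Definition free_vars (phi : formula) : list nat :=
  filter (fun x => freeb x phi) (seq 0 (S (max_var phi))).

Definition closure (phi : formula) : formula :=
  fold_right All phi (free_vars phi).

Fixpoint tsubst (sg : nat -> term) (t : term) : term :=
  match t with
  | Var y => sg y
  | Zero => Zero
  | Succ t1 => Succ (tsubst sg t1)
  | Plus t1 t2 => Plus (tsubst sg t1) (tsubst sg t2)
  | Times t1 t2 => Times (tsubst sg t1) (tsubst sg t2)
  end.

Definition shield (sg : nat -> term) (y : nat) : nat -> term :=
  fun v => if Nat.eqb v y then Var v else sg v.

Fixpoint psubst (sg : nat -> term) (phi : formula) : formula :=
  match phi with
  | Eq t1 t2 => Eq (tsubst sg t1) (tsubst sg t2)
  | Neg p => Neg (psubst sg p)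
  | Imp p q => Imp (psubst sg p) (psubst sg q)
  | All y p => All y (psubst (shield sg y) p)
  | K p => K (psubst sg p)
  end.

Definition subst1 (x : nat) (t : term) (phi : formula) : formula :=
  psubst (fun v => if Nat.eqb v x then t else Var v) phi.

Fixpoint substitutable (t : term) (x : nat) (phi : formula) : Prop :=
  match phi with
  | Eq _ _ => True
  | Neg p => substitutable t x p
  | Imp p q => substitutable t x p /\ substitutable t x q
  | All y p => freeb x (All y p) = false \/
               (occurs_term y t = false /\ substitutable t x p)
  | K p => substitutable t x p
  end.

(** Alphabetic variants (alpha-equivalence), via a context of paired bound variables. *)
Fixpoint var_rel (ctx : list (nat * nat)) (x y : nat) : Prop :=
  match ctx with
  | [] => x = y
  | (a, b) :: c => (a = x /\ b = y) \/ (a <> x /\ b <> y /\ var_rel c x y)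
  end.

Fixpoint term_aeq (ctx : list (nat * nat)) (t u : term) : Prop :=
  match t, u with
  | Var x, Var y => var_rel ctx x y
  | Zero, Zero => True
  | Succ t1, Succ u1 => term_aeq ctx t1 u1
  | Plus t1 t2, Plus u1 u2 => term_aeq ctx t1 u1 /\ term_aeq ctx t2 u2
  | Times t1 t2, Times u1 u2 => term_aeq ctx t1 u1 /\ term_aeq ctx t2 u2
  | _, _ => False
  end.

Fixpoint aeq (ctx : list (nat * nat)) (phi psi : formula) : Prop :=
  match phi, psi with
  | Eq t1 t2, Eq u1 u2 => term_aeq ctx t1 u1 /\ term_aeq ctx t2 u2
  | Neg p, Neg q => aeq ctx p q
  | Imp p1 p2, Imp q1 q2 => aeq ctx p1 q1 /\ aeq ctx p2 q2
  | All x p, All y q => aeq ((x, y) :: ctx) p q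
  | K p, K q => aeq ctx p q
  | _, _ => False
  end.

Definition alphabetic_variant (phi psi : formula) : Prop := aeq [] phi psi.

Record prestructure : Type := {
  dom : Type;
  i_zero : dom;
  i_succ : dom -> dom;
  i_plus : dom -> dom -> dom;
  i_times : dom -> dom -> dom;
  i_K : formula -> (nat -> dom) -> Prop
}.

Definition upd {A : Type} (s : nat -> A) (x : nat) (d : A) : nat -> A :=
  fun v => if Nat.eqb v x then d else s v.

Fixpoint eval (M : prestructure) (s : nat -> dom M) (t : term) : dom M :=
  match t with
  | Var y => s y
  | Zero => i_zero M
  | Succ t1 => i_succ M (eval M s t1)
  | Plus t1 t2 => i_plus M (eval M s t1) (eval M s t2)
  | Times t1 t2 => i_times M (eval M s t1) (eval M s t2)
  end.

Fixpoint sat (M : prestructure) (phi : formula) (s : nat -> dom M) : Prop :=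
  match phi with
  | Eq t1 t2 => eval M s t1 = eval M s t2
  | Neg p => ~ sat M p s
  | Imp p q => sat M p s -> sat M q s
  | All x p => forall d : dom M, sat M p (upd s x d)
  | K p => i_K M p s
  end.

Definition is_Lstructure (M : prestructure) : Prop :=
  (forall phi (s s' : nat -> dom M),
      (forall x, freeb x phi = true -> s x = s' x) ->
      (i_K M phi s <-> i_K M phi s')) /\
  (forall phi psi (s : nat -> dom M),
      alphabetic_variant phi psi -> (i_K M phi s <-> i_K M psi s)) /\
  (forall phi x y (s : nat -> dom M),
      substitutable (Var y) x phi ->
      (i_K M (subst1 x (Var y) phi) s <-> i_K M phi (upd s x (s y)))).

Definition conseq (Sigma : formula -> Prop) (phi : formula) : Prop :=
  forall M : prestructure, is_Lstructure M ->
    (forall sg, Sigma sg -> forall s : nat -> dom M, sat M sg s) ->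
    forall s : nat -> dom M, sat M phi s.

Definition valid (phi : formula) : Prop := conseq (fun _ => False) phi.

Definition numeral (n : nat) : term := Nat.iter n Succ Zero.

Definition inst (phi : formula) (s : nat -> nat) : formula :=
  psubst (fun x => numeral (s x)) phi.

Definition M_Sigma (Sigma : formula -> Prop) : prestructure := {|
  dom := nat;
  i_zero := 0;
  i_succ := S;
  i_plus := Nat.add;
  i_times := Nat.mul;
  i_K := fun phi s => conseq Sigma (inst phi s)
|}.

Definition E1_instances_in (Sigma : formula -> Prop) : Prop :=
  forall phi, valid phi -> Sigma (closure (K phi)).

Definition E2_instances_in (Sigma : formula -> Prop) : Prop :=
  forall phi psi, Sigma (closure (Imp (K (Imp phi psi)) (Imp (K phi) (K psi)))).

From Stdlib Require Import List Arith Lia Bool.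
From Stdlib Require Import Classical ClassicalEpsilon FunctionalExtensionality ProofIrrelevance PropExtensionality.
From mathcomp Require classical_sets filter.
Import ListNotations.

(** The semantic core of the argument: if [Sigma |= psi] then, by compactness,
    [psi] follows from finitely many [d1, ..., dn] in [Sigma], so
    [d1 -> ... -> dn -> psi] is valid (the [di] are sentences) and [E1] gives
    [K (d1 -> ... -> dn -> psi)]; closure under [K] gives [K di] in [Sigma],
    and [n] applications of [E2] peel off the antecedents, so [Sigma |= K psi].
    Instantiating at [psi = phi^s] is exactly [E4] in [M_Sigma].  Compactness
    for this semantics is proved with an ultraproduct, over an ultrafilter
    containing every cone [{D | L ⊆ D}], of countermodels of [psi] indexed by
    finite lists [D] of formulas and satisfying [D ∩ Sigma]. *)

Lemma upd_same {A : Type} (s : nat -> A) (x : nat) : upd s x (s x) = s.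
Proof.
  apply functional_extensionality; intros v; unfold upd.
  destruct (Nat.eqb_spec v x); congruence.
Qed.

Lemma sat_fold_All_intro M phi (l : list nat) :
  (forall s, sat M phi s) -> forall s, sat M (fold_right All phi l) s.
Proof. intros H; induction l as [|x l IH]; simpl; auto. Qed.

Lemma sat_fold_All_elim M phi (l : list nat) s :
  sat M (fold_right All phi l) s -> sat M phi s.
Proof.
  revert s; induction l as [|x l IH]; simpl; intros s H; auto.
  apply IH. rewrite <- (upd_same s x). apply H.
Qed.

Lemma eval_coincide M (s s' : nat -> dom M) t :
  (forall x, occurs_term x t = true -> s x = s' x) -> eval M s t = eval M s' t.
Proof.
  induction t; simpl; intros H; try f_equal; auto using Nat.eqb_refl;
    [apply IHt1 | apply IHt2 | apply IHt1 | apply IHt2];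
    intros x Hx; apply H; rewrite Hx; auto using orb_true_r.
Qed.

Lemma sat_coincide M (HM : is_Lstructure M) phi : forall s s' : nat -> dom M,
  (forall x, freeb x phi = true -> s x = s' x) -> (sat M phi s <-> sat M phi s').
Proof.
  induction phi; simpl; intros s s' H.
  - rewrite (eval_coincide M s s' t), (eval_coincide M s s' t0); [tauto | |];
      intros x Hx; apply H; rewrite Hx; auto using orb_true_r.
  - rewrite (IHphi s s' H); tauto.
  - rewrite (IHphi1 s s'), (IHphi2 s s'); [tauto | |];
      intros x Hx; apply H; rewrite Hx; auto using orb_true_r.
  - assert (Hupd : forall d x, freeb x phi = true -> upd s n d x = upd s' n d x).
    { intros d x Hx; unfold upd. destruct (Nat.eqb_spec x n) as [|Hxn]; auto.
      apply H. apply Nat.eqb_neq in Hxn. now rewrite Hxn, Hx. }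
    split; intros Hd d; apply (IHphi _ _ (Hupd d)); auto.
  - destruct HM as [Ha _]. now apply Ha.
Qed.

Lemma occurs_term_le_max_var x t : occurs_term x t = true -> x <= max_var_term t.
Proof.
  induction t; simpl; intros H; try discriminate.
  - apply Nat.eqb_eq in H; lia.
  - auto.
  - apply orb_true_iff in H as [H|H]; [specialize (IHt1 H) | specialize (IHt2 H)]; lia.
  - apply orb_true_iff in H as [H|H]; [specialize (IHt1 H) | specialize (IHt2 H)]; lia.
Qed.

Lemma freeb_le_max_var x phi : freeb x phi = true -> x <= max_var phi.
Proof.
  induction phi; simpl; intros H; auto.
  - apply orb_true_iff in H as [H|H]; apply occurs_term_le_max_var in H; lia.
  - apply orb_true_iff in H as [H|H]; [specialize (IHphi1 H) | specialize (IHphi2 H)]; lia.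
  - apply andb_true_iff in H as [_ H]. specialize (IHphi H). lia.
Qed.

Lemma in_free_vars x phi : freeb x phi = true -> In x (free_vars phi).
Proof.
  intros H. apply filter_In. split; auto.
  apply in_seq. apply freeb_le_max_var in H. lia.
Qed.

Lemma conseq_mono (Sigma Sigma' : formula -> Prop) psi :
  (forall f, Sigma f -> Sigma' f) -> conseq Sigma psi -> conseq Sigma' psi.
Proof. intros Hsub H M HM HS. apply H; auto. Qed.

Fixpoint imp_chain (l : list formula) (psi : formula) : formula :=
  match l with
  | [] => psi
  | d :: l' => Imp d (imp_chain l' psi)
  end.

Lemma sat_imp_chain M l psi s :
  sat M (imp_chain l psi) s <-> ((forall d, In d l -> sat M d s) -> sat M psi s).
Proof.
  induction l as [|d l IH]; simpl.
  - firstorder.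
  - rewrite IH. firstorder congruence.
Qed.

Lemma valid_imp_chain l psi :
  (forall d, In d l -> sentence d) -> conseq (fun f => In f l) psi ->
  valid (imp_chain l psi).
Proof.
  intros Hsent H M HM _ s. apply sat_imp_chain. intros Hl.
  apply H; auto. intros d Hd s'.
  apply (sat_coincide M HM d s s'); auto.
  intros x Hx. now rewrite (Hsent d Hd x) in Hx.
Qed.

Lemma exists_sublist_filter (P : formula -> Prop) (D : list formula) :
  exists l, forall f, In f l <-> In f D /\ P f.
Proof.
  induction D as [|d D [l IH]].
  - exists []; simpl; tauto.
  - destruct (classic (P d)) as [Hd|Hd]; [exists (d :: l) | exists l];
      simpl; intros f; rewrite IH; firstorder congruence.
Qed.

Record ultrafilter {I : Type} (U : (I -> Prop) -> Prop) : Prop := {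
  ultra_mono : forall A B : I -> Prop, U A -> (forall i, A i -> B i) -> U B;
  ultra_and : forall A B : I -> Prop, U A -> U B -> U (fun i => A i /\ B i);
  ultra_proper : ~ U (fun _ => False);
  ultra_total : forall A : I -> Prop, U A \/ U (fun i => ~ A i)
}.

Lemma ultra_true {I : Type} (U : (I -> Prop) -> Prop) :
  ultrafilter U -> U (fun _ => True).
Proof.
  intros HU. destruct (ultra_total U HU (fun _ => False)) as [H|H].
  - now apply ultra_proper in H.
  - apply (ultra_mono U HU _ _ H). trivial.
Qed.

Lemma ultrafilter_incl_cofinal (X : Type) :
  exists U : (list X -> Prop) -> Prop,
    ultrafilter U /\ forall L : list X, U (fun D => incl L D).
Proof.
  pose (F := fun A : list X -> Prop => exists L, forall D, incl L D -> A D).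
  assert (HF : filter.ProperFilter F).
  { apply filter.Build_ProperFilter_ex.
    - intros A [L HL]. exists L. apply HL, incl_refl.
    - constructor.
      + exists nil. intros D _. exact I.
      + intros A B [L1 H1] [L2 H2]. exists (L1 ++ L2). intros D HD. split.
        * apply H1. intros x Hx. apply HD, in_or_app. now left.
        * apply H2. intros x Hx. apply HD, in_or_app. now right.
      + intros A B HAB [L HL]. exists L. intros D HD. apply HAB, HL, HD. }
  destruct (filter.ultraFilterLemma HF) as [G [HG HFG]].
  exists G. split.
  - constructor.
    + intros A B HA HAB. exact (filter.filterS HAB HA).
    + intros A B HA HB. exact (filter.filterI HA HB).
    + exact (filter.filter_not_empty G).
    + intros A. exact (filter.in_ultra_setVsetC A HG).
  - intros L. apply HFG. exists L. trivial.
Qed.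

Section Ultraproduct.

Variable I : Type.
Variable N : I -> prestructure.
Variable U : (I -> Prop) -> Prop.
Hypothesis HU : ultrafilter U.
Hypothesis N_L : forall i, is_Lstructure (N i).

Let mono := ultra_mono U HU.
Let both := ultra_and U HU.

Definition prod_dom : Type := forall i, dom (N i).

Definition ueq (f g : prod_dom) : Prop := U (fun i => f i = g i).

Lemma ueq_refl f : ueq f f.
Proof. apply (mono _ _ (ultra_true U HU)); auto. Qed.

Lemma ueq_trans f g h : ueq f g -> ueq g h -> ueq f h.
Proof. intros H1 H2. apply (mono _ _ (both _ _ H1 H2)). intros i [-> ->]; auto. Qed.

Lemma ueq_sym f g : ueq f g -> ueq g f.
Proof. intros H. apply (mono _ _ H); auto. Qed.

(** Quotienting by [ueq] without setoids: each class is represented by the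
    element chosen from it by [epsilon], which depends only on the class. *)
Definition repr (f : prod_dom) : prod_dom := epsilon (inhabits f) (fun g => ueq g f).

Lemma ueq_repr f : ueq (repr f) f.
Proof.
  apply (epsilon_spec (inhabits f) (fun g => ueq g f)). exists f. apply ueq_refl.
Qed.

Lemma repr_ueq f g : ueq f g -> repr f = repr g.
Proof.
  intros H. unfold repr.
  replace (fun h => ueq h f) with (fun h => ueq h g); [f_equal; apply proof_irrelevance|].
  apply functional_extensionality; intros h; apply propositional_extensionality.
  split; intros H'; eauto using ueq_trans, ueq_sym.
Qed.

Definition uclass : Type := {f : prod_dom | repr f = f}.

Definition cls (f : prod_dom) : uclass :=
  exist _ (repr f) (repr_ueq (repr f) f (ueq_repr f)).

Lemma ueq_cls f : ueq (proj1_sig (cls f)) f.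
Proof. apply ueq_repr. Qed.

Lemma uclass_eq (a b : uclass) : ueq (proj1_sig a) (proj1_sig b) -> a = b.
Proof.
  destruct a as [f Hf], b as [g Hg]; simpl; intros H.
  assert (f = g) by (rewrite <- Hf, <- Hg; now apply repr_ueq). subst.
  f_equal; apply proof_irrelevance.
Qed.

Definition lift (s : nat -> uclass) (i : I) : nat -> dom (N i) :=
  fun x => proj1_sig (s x) i.

Lemma lift_upd s x d i : lift (upd s x d) i = upd (lift s i) x (proj1_sig d i).
Proof.
  apply functional_extensionality; intros v; unfold lift, upd.
  now destruct (Nat.eqb v x).
Qed.

Lemma lift_cls (h : nat -> prod_dom) (l : list nat) :
  U (fun i => forall x, In x l -> lift (fun x => cls (h x)) i x = h x i).
Proof.
  induction l as [|x l IH].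
  - apply (mono _ _ (ultra_true U HU)). intros i _ x [].
  - apply (mono _ _ (both _ _ IH (ueq_cls (h x)))).
    intros i [Hl Hx] y [<-|Hy]; auto.
Qed.

Definition ultraproduct : prestructure := {|
  dom := uclass;
  i_zero := cls (fun i => i_zero (N i));
  i_succ := fun a => cls (fun i => i_succ (N i) (proj1_sig a i));
  i_plus := fun a b => cls (fun i => i_plus (N i) (proj1_sig a i) (proj1_sig b i));
  i_times := fun a b => cls (fun i => i_times (N i) (proj1_sig a i) (proj1_sig b i));
  i_K := fun phi s => U (fun i => i_K (N i) phi (lift s i))
|}.

Lemma eval_ultraproduct s t :
  ueq (proj1_sig (eval ultraproduct s t)) (fun i => eval (N i) (lift s i) t).
Proof.
  induction t; simpl; [apply ueq_refl | apply ueq_cls | ..];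
    (eapply ueq_trans; [apply ueq_cls |]).
  - apply (mono _ _ IHt). intros i ->; auto.
  - apply (mono _ _ (both _ _ IHt1 IHt2)). intros i [-> ->]; auto.
  - apply (mono _ _ (both _ _ IHt1 IHt2)). intros i [-> ->]; auto.
Qed.

Lemma sat_ultraproduct_All n phi s :
  (forall s, sat ultraproduct phi s <-> U (fun i => sat (N i) phi (lift s i))) ->
  (sat ultraproduct (All n phi) s <->
     U (fun i => sat (N i) (All n phi) (lift s i))).
Proof.
  intros IH; simpl. split; intros H.
  - destruct (ultra_total U HU (fun i => forall d, sat (N i) phi (upd (lift s i) n d)))
      as [H1|H1]; auto.
    exfalso.
    (* a witness of the failure in each factor, glued into one element *)
    set (w := fun i => epsilon (inhabits (i_zero (N i)))
                         (fun e => ~ sat (N i) phi (upd (lift s i) n e))).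
    specialize (H (cls w)). rewrite IH in H.
    apply (ultra_proper U HU).
    apply (mono _ _ (both _ _ (both _ _ H (ueq_cls w)) H1)).
    intros i [[Hs Hw] Hn]. rewrite lift_upd, Hw in Hs.
    apply not_all_ex_not in Hn.
    exact (epsilon_spec _ (fun e => ~ sat (N i) phi (upd (lift s i) n e)) Hn Hs).
  - intros d. rewrite IH. apply (mono _ _ H). intros i Hi. rewrite lift_upd. apply Hi.
Qed.

Lemma sat_ultraproduct phi : forall s,
  sat ultraproduct phi s <-> U (fun i => sat (N i) phi (lift s i)).
Proof.
  induction phi; intros s.
  - simpl. split; intros H.
    + pose proof (eval_ultraproduct s t) as H1.
      pose proof (eval_ultraproduct s t0) as H2. rewrite H in H1.
      apply (mono _ _ (both _ _ H1 H2)). intros i [<- <-]; auto.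
    + apply uclass_eq. eapply ueq_trans; [apply eval_ultraproduct|].
      eapply ueq_trans; [exact H | apply ueq_sym, eval_ultraproduct].
  - simpl. rewrite IHphi. split; intros H.
    + destruct (ultra_total U HU (fun i => sat (N i) phi (lift s i))); tauto.
    + intros H'. apply (ultra_proper U HU). apply (mono _ _ (both _ _ H H')). tauto.
  - simpl. rewrite IHphi1, IHphi2. split; intros H.
    + destruct (ultra_total U HU (fun i => sat (N i) phi1 (lift s i))) as [H1|H1].
      * apply (mono _ _ (H H1)); auto.
      * apply (mono _ _ H1); tauto.
    + intros H1. apply (mono _ _ (both _ _ H H1)); tauto.
  - now apply sat_ultraproduct_All.
  - reflexivity.
Qed.

Lemma ultraproduct_is_Lstructure : is_Lstructure ultraproduct.
Proof.
  split; [|split]; simpl.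
  - intros phi s s' H.
    split; intros H'; apply (mono _ _ H'); intros i Hi;
      apply (proj1 (N_L i) phi (lift s i) (lift s' i)); auto;
      intros x Hx; unfold lift; rewrite H; auto.
  - intros phi psi s H.
    split; intros H'; apply (mono _ _ H'); intros i Hi;
      apply (proj1 (proj2 (N_L i)) phi psi (lift s i) H); auto.
  - intros phi x y s H.
    split; intros H'; apply (mono _ _ H'); intros i Hi; rewrite lift_upd in *;
      apply (proj2 (proj2 (N_L i)) phi x y (lift s i) H); auto.
Qed.

End Ultraproduct.

Lemma conseq_compact Sigma psi :
  conseq Sigma psi -> exists D, conseq (fun f => In f D /\ Sigma f) psi.
Proof.
  intros Hc. apply NNPP; intros Hn.
  assert (Hcounter : forall D : list formula,
    exists p : {M : prestructure & nat -> dom M},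
      is_Lstructure (projT1 p) /\
      (forall sg, In sg D /\ Sigma sg -> forall s, sat (projT1 p) sg s) /\
      ~ sat (projT1 p) psi (projT2 p)).
  { intros D. assert (H := fun h => Hn (ex_intro _ D h)). unfold conseq in H.
    apply not_all_ex_not in H as [M H]. apply imply_to_and in H as [HM H].
    apply imply_to_and in H as [HS H]. apply not_all_ex_not in H as [s H].
    now exists (existT _ M s). }
  apply choice in Hcounter as [c Hc_spec].
  destruct (ultrafilter_incl_cofinal formula) as [U [HU Hcof]].
  set (N := fun D => projT1 (c D)).
  set (s0 := fun x => cls _ N U HU (fun D => projT2 (c D) x)).
  assert (HUP := ultraproduct_is_Lstructure _ N U HU (fun D => proj1 (Hc_spec D))).
  assert (HSigma : forall sg, Sigma sg -> forall s, sat (ultraproduct _ N U HU) sg s).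
  { intros sg Hsg s. apply sat_ultraproduct.
    apply (ultra_mono U HU _ _ (Hcof [sg])). intros D HD.
    apply (Hc_spec D). split; auto. apply HD. now left. }
  specialize (Hc _ HUP HSigma s0). apply sat_ultraproduct in Hc.
  apply (ultra_proper U HU).
  apply (ultra_mono U HU _ _ (ultra_and U HU _ _ Hc (lift_cls _ N U HU (fun x D => projT2 (c D) x) (free_vars psi)))).
  intros D [Hpsi Hagree]. apply (proj2 (proj2 (Hc_spec D))).
  apply (sat_coincide _ (proj1 (Hc_spec D)) psi (lift _ N U s0 D)); auto.
  intros x Hx. apply Hagree, in_free_vars, Hx.
Qed.

Lemma conseq_compact_sublist Sigma psi :
  conseq Sigma psi ->
  exists l, (forall f, In f l -> Sigma f) /\ conseq (fun f => In f l) psi.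
Proof.
  intros Hc. destruct (conseq_compact Sigma psi Hc) as [D HD].
  destruct (exists_sublist_filter Sigma D) as [l Hl].
  exists l. split.
  - intros f Hf. now apply Hl.
  - apply (conseq_mono _ _ _ (fun f Hf => proj2 (Hl f) Hf) HD).
Qed.

Lemma sat_K_imp_chain Sigma
  (HK : forall phi, Sigma phi -> Sigma (K phi))
  (HE2 : E2_instances_in Sigma)
  M (HM : forall sg, Sigma sg -> forall s, sat M sg s) s psi l :
  (forall d, In d l -> Sigma d) -> sat M (K (imp_chain l psi)) s -> sat M (K psi) s.
Proof.
  induction l as [|d l IH]; simpl; intros Hl H; auto.
  apply IH; auto.
  apply (sat_fold_All_elim _ _ _ s (HM _ (HE2 d (imp_chain l psi)) s)); auto.
  exact (HM _ (HK d (Hl d (or_introl eq_refl))) s).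
Qed.

Lemma conseq_K Sigma
  (Hsent : forall sg, Sigma sg -> sentence sg)
  (HK : forall phi, Sigma phi -> Sigma (K phi))
  (HE1 : E1_instances_in Sigma) (HE2 : E2_instances_in Sigma) psi :
  conseq Sigma psi -> conseq Sigma (K psi).
Proof.
  intros Hc. destruct (conseq_compact_sublist Sigma psi Hc) as [l [HlS Hl]].
  assert (Hvalid : valid (imp_chain l psi)).
  { apply valid_imp_chain; auto. }
  intros M HM HS s. apply (sat_K_imp_chain Sigma HK HE2 M HS s psi l HlS).
  exact (sat_fold_All_elim _ _ _ s (HS _ (HE1 _ Hvalid) s)).
Qed.

Theorem lemma12 (Sigma : formula -> Prop)
  (Hsent : forall sg, Sigma sg -> sentence sg)
  (HK : forall phi, Sigma phi -> Sigma (K phi))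
  (HE1 : E1_instances_in Sigma)
  (HE2 : E2_instances_in Sigma) :
  forall (phi : formula) (s : nat -> nat),
    sat (M_Sigma Sigma) (closure (Imp (K phi) (K (K phi)))) s.
Proof.
  intros phi. apply (sat_fold_All_intro (M_Sigma Sigma)). intros s.
  change (conseq Sigma (inst phi s) -> conseq Sigma (K (inst phi s))).
  now apply conseq_K.
Qed.
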